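(* Neither the unimodal spi-logic $\mathsf{SPi}+\{\iota_{wcon}\}$ nor $\mathsf{SPi}_{lin}=\mathsf{SPi}+\{p\to\Diamond p,\ \Diamond\Diamond p\to\Diamond p,\ \iota_{wcon}\}$ is complex, where $\iota_{wcon}=\big(\Diamond(p\wedge q)\wedge\Diamond(p\wedge r)\to\Diamond(p\wedge\Diamond q\wedge\Diamond r)\big)$.
   Context: Unimodal setting: one diamond $\Diamond$. Sp-formulas: built from propositional variables and $\top$ by $\wedge$ and $\Diamond$; sp-implications $\sigma\to\tau$. A SLO is an algebra $(A,\wedge,\top,\Diamond)$ with $(A,\wedge,\top)$ a meet-semilattice with top and $\Diamond$ monotone; it validates $\sigma\to\tau$ if $\sigma[\mathfrak a]\le\tau[\mathfrak a]$ for all valuations. Frames $(W,R)$ with standard Kripke semantics. $\mathsf{SPi}+\Sigma$ denotes the set of sp-implications valid in all SLOs validating $\Sigma$. For a frame $\mathfrak F=(W,R)$, $\mathfrak F^\star=(2^W,\cap,W,\Diamond^+)$ with $\Diamond^+X=\{w\mid\exists v\in X,(w,v)\in R\}$. A spi-logic $L$ is complex if every SLO validating $L$ embeds (injectively, preserving $\wedge,\top,\Diamond$) into $\mathfrak F^\star$ for some frame $\mathfrak F$ validating $L$. *)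

Set Implicit Arguments.

Inductive fm : Type :=
| Var : nat -> fm
| Top : fm
| And : fm -> fm -> fm
| Dia : fm -> fm.

(** An sp-implication sigma -> tau. *)
Definition spi : Type := (fm * fm)%type.

Record SLO : Type := {
  car :> Type;
  meet : car -> car -> car;
  topA : car;
  dia : car -> car;
  meet_assoc : forall a b c, meet a (meet b c) = meet (meet a b) c;
  meet_comm : forall a b, meet a b = meet b a;
  meet_idem : forall a, meet a a = a;
  meet_top : forall a, meet a topA = a;
  dia_mono : forall a b, meet a b = a -> meet (dia a) (dia b) = dia a
}.

Definition sle (A : SLO) (a b : A) : Prop := meet A a b = a.

Fixpoint evalA (A : SLO) (v : nat -> A) (s : fm) : A :=
  match s with
  | Var n => v n
  | Top => topA A
  | And s t => meet A (evalA A v s) (evalA A v t)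
  | Dia s => dia A (evalA A v s)
  end.

Definition SLO_valid (A : SLO) (i : spi) : Prop :=
  forall v : nat -> A, sle A (evalA A v (fst i)) (evalA A v (snd i)).

Definition SPi_plus (Sigma : spi -> Prop) : spi -> Prop :=
  fun i => forall A : SLO, (forall j, Sigma j -> SLO_valid A j) -> SLO_valid A i.

Record frame : Type := { world : Type; rel : world -> world -> Prop }.

Fixpoint sat (F : frame) (V : nat -> world F -> Prop) (w : world F) (s : fm)
  : Prop :=
  match s with
  | Var n => V n w
  | Top => True
  | And s t => sat F V w s /\ sat F V w t
  | Dia s => exists u, rel F w u /\ sat F V u s
  end.

Definition frame_valid (F : frame) (i : spi) : Prop :=
  forall (V : nat -> world F -> Prop) (w : world F),
    sat F V w (fst i) -> sat F V w (snd i).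

(** An embedding of the SLO A into F* = (2^W, cap, W, Diamond^+):
    an injective map preserving meet, top and diamond (subsets of W
    are predicates W -> Prop, compared extensionally). *)
Definition set_eq (W : Type) (X Y : W -> Prop) : Prop := forall w, X w <-> Y w.

Definition dia_plus (F : frame) (X : world F -> Prop) : world F -> Prop :=
  fun w => exists v, X v /\ rel F w v.

Definition embeds_into_complex (A : SLO) (F : frame) : Prop :=
  exists f : A -> (world F -> Prop),
    (forall a b, set_eq (f a) (f b) -> a = b) /\
    (forall a b, set_eq (f (meet A a b)) (fun w => f a w /\ f b w)) /\
    set_eq (f (topA A)) (fun _ => True) /\
    (forall a, set_eq (f (dia A a)) (dia_plus F (f a))).

Definition complex (L : spi -> Prop) : Prop :=
  forall A : SLO, (forall i, L i -> SLO_valid A i) ->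
    exists F : frame, (forall i, L i -> frame_valid F i) /\ embeds_into_complex A F.

Definition p : fm := Var 0.
Definition q : fm := Var 1.
Definition r : fm := Var 2.

Definition iota_wcon : spi :=
  (And (Dia (And p q)) (Dia (And p r)), Dia (And p (And (Dia q) (Dia r)))).

Definition iota_refl : spi := (p, Dia p).
Definition iota_trans : spi := (Dia (Dia p), Dia p).

Definition Sigma_wcon : spi -> Prop := fun i => i = iota_wcon.
Definition Sigma_lin : spi -> Prop :=
  fun i => i = iota_refl \/ i = iota_trans \/ i = iota_wcon.

Definition SPi_wcon : spi -> Prop := SPi_plus Sigma_wcon.
Definition SPi_lin : spi -> Prop := SPi_plus Sigma_lin.

(* A seven-element SLO A7 validates reflexivity, transitivity and iota_wcon,
   yet its elements ◇a ∧ ◇b and ⊥ cannot be separated in F* for any frame F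
   validating iota_wcon: a world seeing both an a-world and a b-world sees,
   by iota_wcon, a world in (a ∧ ◇b) ∨ (b ∧ ◇a), and both disjuncts are ⊥
   in A7.  So A7 validates both logics but embeds into no frame of either. *)


Set Implicit Arguments.

Lemma SPi_plus_incl (Sigma : spi -> Prop) (i : spi) :
  Sigma i -> SPi_plus Sigma i.
Proof. intros Hi A HA. exact (HA i Hi). Qed.

Lemma not_complex_SPi_plus (Sigma : spi -> Prop) (A : SLO) (i : spi) :
  Sigma i ->
  (forall j, Sigma j -> SLO_valid A j) ->
  (forall F : frame, frame_valid F i -> ~ embeds_into_complex A F) ->
  ~ complex (SPi_plus Sigma).
Proof.
  intros Hi HA Hno Hc.
  destruct (Hc A) as [F [HF He]].
  - intros j Hj. exact (Hj A HA).
  - exact (Hno F (HF i (SPi_plus_incl Sigma i Hi)) He).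
Qed.

Lemma frame_wcon_dia_meet (F : frame) (X Y : world F -> Prop) (w : world F) :
  frame_valid F iota_wcon ->
  dia_plus F X w -> dia_plus F Y w ->
  dia_plus F (fun x => (X x /\ dia_plus F Y x) \/ (Y x /\ dia_plus F X x)) w.
Proof.
  intros Hwcon [u [Xu Rwu]] [v [Yv Rwv]].
  pose (V := fun n : nat => match n with
                            | 0 => fun x => X x \/ Y x
                            | 1 => X
                            | _ => Y
                            end).
  destruct (Hwcon V w) as [x [Rwx [[Xx | Yx] [[y [Rxy Xy]] [z [Rxz Yz]]]]]].
  - split; [exists u | exists v]; simpl; auto.
  - exists x. split; [left; split|]; [exact Xx | exists z; auto | exact Rwx].
  - exists x. split; [right; split|]; [exact Yx | exists y; auto | exact Rwx].
Qed.

Section Embedding.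

Context {A : SLO} {F : frame} {f : A -> world F -> Prop}.
Hypothesis f_meet :
  forall a b, set_eq (f (meet A a b)) (fun w => f a w /\ f b w).
Hypothesis f_dia : forall a, set_eq (f (dia A a)) (dia_plus F (f a)).

Lemma embedding_mono (a b : A) (w : world F) : sle A a b -> f a w -> f b w.
Proof. intros Hab Ha. rewrite <- Hab in Ha. apply f_meet in Ha. tauto. Qed.

Lemma embedding_wcon_dia_meet (a b : A) (w : world F) :
  frame_valid F iota_wcon ->
  f (meet A (dia A a) (dia A b)) w ->
  dia_plus F (fun x => f (meet A a (dia A b)) x \/ f (meet A b (dia A a)) x) w.
Proof.
  intros Hwcon Hw. apply f_meet in Hw as [Ha Hb].
  apply f_dia in Ha. apply f_dia in Hb.
  destruct (frame_wcon_dia_meet Hwcon Ha Hb) as [x [Hx Rwx]].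
  exists x. split; [|exact Rwx].
  destruct Hx as [[Xa Yb] | [Xb Ya]]; [left | right]; apply f_meet;
    split; try apply f_dia; assumption.
Qed.

End Embedding.

Inductive seven : Type := bot | at_a | at_b | dia_a | dia_b | dia_ab | top.

Definition le7 (x y : seven) : bool :=
  match x, y with
  | bot, _ | _, top => true
  | at_a, (at_a | dia_a) | at_b, (at_b | dia_b) => true
  | dia_a, dia_a | dia_b, dia_b => true
  | dia_ab, (dia_ab | dia_a | dia_b) => true
  | _, _ => false
  end.

Definition meet7 (x y : seven) : seven :=
  if le7 x y then x else if le7 y x then y else
  match x, y with
  | dia_a, dia_b | dia_b, dia_a => dia_ab
  | _, _ => bot
  end.

Definition dia7 (x : seven) : seven :=
  match x with
  | at_a => dia_a
  | at_b => dia_b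
  | y => y
  end.

Lemma meet7_assoc (x y z : seven) : meet7 x (meet7 y z) = meet7 (meet7 x y) z.
Proof. destruct x, y, z; reflexivity. Qed.

Lemma meet7_comm (x y : seven) : meet7 x y = meet7 y x.
Proof. destruct x, y; reflexivity. Qed.

Lemma meet7_idem (x : seven) : meet7 x x = x.
Proof. destruct x; reflexivity. Qed.

Lemma meet7_top (x : seven) : meet7 x top = x.
Proof. destruct x; reflexivity. Qed.

Lemma dia7_mono (x y : seven) :
  meet7 x y = x -> meet7 (dia7 x) (dia7 y) = dia7 x.
Proof. destruct x, y; simpl; intro H; try reflexivity; discriminate. Qed.

Definition A7 : SLO :=
  Build_SLO meet7 top dia7 meet7_assoc meet7_comm meet7_idem meet7_top dia7_mono.

Lemma A7_valid_lin (i : spi) : Sigma_lin i -> SLO_valid A7 i.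
Proof.
  intros [-> | [-> | ->]] v; unfold sle; simpl.
  - destruct (v 0); reflexivity.
  - destruct (v 0); reflexivity.
  - destruct (v 0), (v 1), (v 2); reflexivity.
Qed.

Lemma A7_valid_wcon (i : spi) : Sigma_wcon i -> SLO_valid A7 i.
Proof. intro Hi. apply A7_valid_lin. right; right; exact Hi. Qed.

Lemma A7_not_embeds (F : frame) :
  frame_valid F iota_wcon -> ~ embeds_into_complex A7 F.
Proof.
  intros Hwcon [f [f_inj [f_meet [_ f_dia]]]].
  assert (Hcollapse : forall w, f dia_ab w -> f bot w).
  { intros w Hw.
    destruct (embedding_wcon_dia_meet f_meet f_dia at_a at_b w Hwcon Hw)
      as [x [Hx Rwx]].
    apply (f_dia bot). exists x. split; [tauto | exact Rwx]. }
  assert (Heq : dia_ab = bot).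
  { apply f_inj. intro w. split; [apply Hcollapse|].
    exact (embedding_mono f_meet (a := bot) (b := dia_ab) w eq_refl). }
  discriminate.
Qed.

Theorem theorem7p11 : ~ complex SPi_wcon /\ ~ complex SPi_lin.
Proof.
  split.
  - exact (not_complex_SPi_plus (eq_refl iota_wcon) A7_valid_wcon A7_not_embeds).
  - exact (not_complex_SPi_plus (or_intror (or_intror (eq_refl iota_wcon)))
             A7_valid_lin A7_not_embeds).
Qed.
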